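(* Let $n\ge 1$ and let $a=(a_1,\dots,a_n)$ be a good sequence of $[n]$. Then: (1) the sequence $b=(b_1,\dots,b_n)$ with $b_i=n+1-a_i$ is a good sequence; (2) if $a_{2l+1}\ge \lceil \frac{n+1}{2}\rceil$ for all $l$ with $2l+1\in[n]$, then the sequence $b$ defined by $b_{2l+1}=a_{2l+1}-\lfloor \frac n2\rfloor$ (for $2l+1\in[n]$) and $b_{2l}=a_{2l}+\lfloor\frac{n+1}{2}\rfloor$ (for $2l\in[n]$) is a good sequence; (3) if $a_{2l+1}\le \lfloor \frac{n+1}{2}\rfloor$ for all $l$ with $2l+1\in[n]$, then the sequence $b$ defined by $b_{2l+1}=a_{2l+1}+\lfloor \frac n2\rfloor$ (for $2l+1\in[n]$) and $b_{2l}=a_{2l}-\lfloor\frac{n+1}{2}\rfloor$ (for $2l\in[n]$) is a good sequence.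
   Context: $[n]=\{1,2,\dots,n\}$. A permutation $a=(a_1,\dots,a_n)$ of $[n]$ is a good sequence if the differences $|a_2-a_1|,\dots,|a_n-a_{n-1}|$ are pairwise distinct and one of the following holds: (i) $a_{2l+1}\ge\lceil\frac{n+1}{2}\rceil$ and $a_{2l}<\lceil\frac{n+1}{2}\rceil$ whenever the indices $2l+1,2l$ lie in $[n]$; or (ii) $a_{2l+1}\le\lfloor\frac{n+1}{2}\rfloor$ and $a_{2l}>\lfloor\frac{n+1}{2}\rfloor$ whenever the indices $2l+1,2l$ lie in $[n]$. (Here $l\ge 0$ is an integer, so odd positions include position $1$.) *)

From mathcomp Require Import all_boot.
Set Implicit Arguments. Unset Strict Implicit. Unset Printing Implicit Defensive.

(* A sequence a = (a_1,...,a_n) is a list of naturals; a_p (1-based) is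
   [ith a p] = nth 0 a (p-1). *)
Definition ith (a : seq nat) (p : nat) : nat := nth 0 a p.-1.

Definition absd (x y : nat) : nat := (x - y) + (y - x).

(* ceil((n+1)/2) and floor((n+1)/2), floor(n/2) *)
Definition ceil_half1 (n : nat) : nat := (n + 2) %/ 2.
Definition floor_half1 (n : nat) : nat := (n + 1) %/ 2.
Definition floor_half (n : nat) : nat := n %/ 2.

Definition is_perm_n (n : nat) (a : seq nat) : Prop := perm_eq a (iota 1 n).

Definition diffs (n : nat) (a : seq nat) : seq nat :=
  [seq absd (ith a p.+1) (ith a p) | p <- iota 1 n.-1].

Definition cond_i (n : nat) (a : seq nat) : Prop :=
  forall p, 1 <= p <= n ->
    (odd p -> ceil_half1 n <= ith a p) /\ (~~ odd p -> ith a p < ceil_half1 n).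

Definition cond_ii (n : nat) (a : seq nat) : Prop :=
  forall p, 1 <= p <= n ->
    (odd p -> ith a p <= floor_half1 n) /\ (~~ odd p -> floor_half1 n < ith a p).

Definition good (n : nat) (a : seq nat) : Prop :=
  is_perm_n n a /\ uniq (diffs n a) /\ (cond_i n a \/ cond_ii n a).

From mathcomp Require Import all_boot zify.
From Stdlib Require Import Lia.
Set Implicit Arguments. Unset Strict Implicit. Unset Printing Implicit Defensive.

(* Write C = ceil((n+1)/2), F0 = floor(n/2), F1 = floor((n+1)/2), so that
   F0 + F1 = n and C = F0 + 1.  The complement x |-> n+1-x permutes [1,n],
   preserves every difference and exchanges conditions (i) and (ii).  If the odd
   positions of a good sequence carry the values >= C, then (i) holds, so the
   even positions carry the values < C; the shift in (2) maps the former onto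
   [1,F1] and the latter onto [F1+1,n], hence is a permutation satisfying (ii).
   Since consecutive entries lie on opposite sides of C, each difference d of a
   becomes n - d, so the differences stay distinct.  Part (3) is part (2)
   conjugated by the complement. *)

Section MapSelf.

Variable T : eqType.

Lemma uniq_map_injP (U : eqType) (f : T -> U) (s : seq T) :
  uniq s -> reflect {in s &, injective f} (uniq (map f s)).
Proof.
move=> us; apply: (iffP idP) => [ufs | injf]; last by rewrite map_inj_in_uniq.
move=> y z /(nthP y) [i hi <-] /(nthP y) [j hj <-].
rewrite -!(nth_map y (f y)) // => /(uniqP (f y) ufs).
by rewrite !inE size_map => /(_ hi hj) ->.
Qed.

Lemma perm_map_selfP (f : T -> T) (s : seq T) : uniq s ->
  perm_eq (map f s) s <-> {in s, forall x, f x \in s} /\ {in s &, injective f}.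
Proof.
move=> us; split=> [pfs | [fs injf]].
  split=> [x xs | ]; first by rewrite -(perm_mem pfs) map_f.
  by apply/(uniq_map_injP _ us); rewrite (perm_uniq pfs).
have ufs : uniq (map f s) by rewrite map_inj_in_uniq.
have sub : {subset map f s <= s} by move=> _ /mapP [x xs ->]; apply: fs.
have [_ eqfs] := uniq_min_size ufs sub (eq_leq (esym (size_map f s))).
exact: uniq_perm.
Qed.

End MapSelf.

Definition gap (a : seq nat) (p : nat) : nat := absd (ith a p.+1) (ith a p).

Lemma map_ith_iota (a : seq nat) : [seq ith a p | p <- iota 1 (size a)] = a.
Proof. by rewrite -[RHS](mkseq_nth 0) /mkseq (iotaDl 1 0) -map_comp; apply: eq_map. Qed.

Lemma ith_map (f : nat -> nat) (a : seq nat) p :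
  0 < p <= size a -> ith (map f a) p = f (ith a p).
Proof. by move=> hp; rewrite /ith (nth_map 0) //; lia. Qed.

Lemma ith_map_iota_succ (g : nat -> nat) n p :
  0 < p <= n -> ith [seq g i.+1 | i <- iota 0 n] p = g p.
Proof.
move=> hp; rewrite /ith (nth_map 0) ?size_iota ?nth_iota; try lia.
by rewrite add0n prednK //; lia.
Qed.

Lemma goodP n a : good n a <->
  [/\ size a = n, {in iota 1 n, forall p, ith a p \in iota 1 n},
      {in iota 1 n &, injective (ith a)},
      {in iota 1 n.-1 &, injective (gap a)} & cond_i n a \/ cond_ii n a].
Proof.
rewrite /good /is_perm_n; split=> [[pa [ud hc]] | [sa ran inj ginj hc]].
  have sa : size a = n by rewrite (perm_size pa) size_iota.
  move: pa; rewrite -{1}(map_ith_iota a) sa => /perm_map_selfP [|ran inj].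
    exact: iota_uniq.
  by split=> //; apply/(uniq_map_injP _ (iota_uniq _ _)).
split; last split=> //; last exact/(uniq_map_injP _ (iota_uniq _ _)).
by rewrite -(map_ith_iota a) sa; apply/perm_map_selfP; rewrite ?iota_uniq.
Qed.

Lemma cond_iP n a : cond_i n a <-> forall p, 0 < p <= n ->
  if odd p then ceil_half1 n <= ith a p else ith a p < ceil_half1 n.
Proof.
split=> h p /h; case: (odd p) => /=;
  by [move=> ?; split | case=> /(_ isT) | case=> _ /(_ isT)].
Qed.

Lemma cond_iiP n a : cond_ii n a <-> forall p, 0 < p <= n ->
  if odd p then ith a p <= floor_half1 n else floor_half1 n < ith a p.
Proof.
split=> h p /h; case: (odd p) => /=;
  by [move=> ?; split | case=> /(_ isT) | case=> _ /(_ isT)].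
Qed.

Lemma halves_spec n : floor_half n + floor_half1 n = n /\ ceil_half1 n = (floor_half n).+1
  /\ floor_half n <= floor_half1 n <= ceil_half1 n.
Proof. rewrite /floor_half /floor_half1 /ceil_half1; lia. Qed.

Lemma good_complement n a : good n a -> good n [seq n.+1 - x | x <- a].
Proof.
case/goodP=> sa ran inj ginj hc; set b := map _ a.
have bE p : 0 < p <= n -> ith b p = n.+1 - ith a p by move=> hp; rewrite ith_map ?sa.
have aR p : 0 < p <= n -> 0 < ith a p <= n.
  by move=> hp; have := ran p; rewrite !mem_iota; lia.
have gapE p : 0 < p < n -> gap b p = gap a p.
  move=> hp; have := aR p ltac:(lia); have := aR p.+1 ltac:(lia).
  by rewrite /gap /absd !bE; lia.
apply/goodP; split.
- by rewrite size_map.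
- by move=> p; rewrite !mem_iota => hp; rewrite bE; have := aR p; lia.
- move=> p q; rewrite !mem_iota => hp hq; rewrite !bE; try lia.
  by move=> e; apply: inj; rewrite ?mem_iota //; have := aR p; have := aR q; lia.
- move=> p q; rewrite !mem_iota => hp hq; rewrite !gapE; try lia.
  by apply: ginj; rewrite mem_iota; lia.
- case: hc => [/cond_iP|/cond_iiP] hc; [right; apply/cond_iiP | left; apply/cond_iP];
    move=> p hp; have := hc p hp; have := aR p hp;
    rewrite bE //; have := halves_spec n; case: (odd p) => /=; lia.
Qed.

Lemma cond_i_of_odd_high n a : good n a ->
  (forall p, 0 < p <= n -> odd p -> ceil_half1 n <= ith a p) -> cond_i n a.
Proof.
case/goodP=> _ _ inj _ [// | /cond_iiP low] high; apply/cond_iP => p hp.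
case: ifP => [/(high p hp) // | even_p]; exfalso.
(* Under (ii) every odd-position value lies in [C, F1]: n is odd and a_1 = a_3 = C. *)
have odd_mid q : 0 < q <= n -> odd q ->
    ith a q = ceil_half1 n /\ ceil_half1 n = floor_half1 n.
  move=> hq oq; have := high q hq oq; have := low q hq.
  by rewrite oq; have := halves_spec n; lia.
have p2 : 2 <= p by case: p hp even_p => [|[]].
have [e1 c] := odd_mid 1 ltac:(lia) isT.
have n3 : 3 <= n by move: c; have := halves_spec n; lia.
have [e3 _] := odd_mid 3 ltac:(lia) isT.
by have := inj 1 3; rewrite !mem_iota e1 e3 => /(_ _ _ erefl); lia.
Qed.

Definition shift_down n (a : seq nat) : seq nat :=
  [seq (if odd i.+1 then ith a i.+1 - floor_half n else ith a i.+1 + floor_half1 n)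
  | i <- iota 0 n].

Definition shift_up n (a : seq nat) : seq nat :=
  [seq (if odd i.+1 then ith a i.+1 + floor_half n else ith a i.+1 - floor_half1 n)
  | i <- iota 0 n].

Lemma good_shift_down n a : good n a -> cond_i n a -> good n (shift_down n a).
Proof.
case/goodP=> sa ran inj ginj _ /cond_iP hi; set b := shift_down n a.
have bE p : 0 < p <= n -> ith b p =
    if odd p then ith a p - floor_half n else ith a p + floor_half1 n.
  exact: (ith_map_iota_succ (fun p => if odd p then _ else _)).
have aR p : 0 < p <= n -> 0 < ith a p <= n.
  by move=> hp; have := ran p; rewrite !mem_iota; lia.
have gapE p : 0 < p < n -> gap b p + gap a p = n.
  move=> hp; rewrite /gap /absd !bE /=; try lia.
  have := hi p; have := hi p.+1; have := aR p; have := aR p.+1.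
  by rewrite /=; have := halves_spec n; case: (odd p) => /=; lia.
apply/goodP; split.
- by rewrite size_map size_iota.
- move=> p; rewrite !mem_iota => hp; rewrite bE; try lia.
  have := hi p; have := aR p.
  by have := halves_spec n; case: (odd p) => /=; lia.
- move=> p q; rewrite !mem_iota => hp hq; rewrite !bE; try lia.
  move=> e; apply: inj; rewrite ?mem_iota //.
  have := hi p; have := aR p; have := hi q; have := aR q; move: e.
  by have := halves_spec n; case: (odd p); case: (odd q) => /=; lia.
- move=> p q; rewrite !mem_iota => hp hq e; apply: ginj; rewrite ?mem_iota //.
  by have := gapE p; have := gapE q; lia.
- right; apply/cond_iiP => p hp; rewrite bE //; have := hi p hp; have := aR p hp.
  by have := halves_spec n; case: (odd p) => /=; lia.
Qed.

Lemma shift_up_complement n a :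
  size a = n -> {in iota 1 n, forall p, ith a p \in iota 1 n} ->
  cond_i n [seq n.+1 - x | x <- a] ->
  shift_up n a = [seq n.+1 - x | x <- shift_down n [seq n.+1 - x | x <- a]].
Proof.
move=> sa ran /cond_iP hc; rewrite -map_comp; apply/eq_in_map => i.
rewrite mem_iota => hi; have hp : 0 < i.+1 <= n by lia.
have := hc _ hp; rewrite /= !ith_map ?sa //; have := halves_spec n.
have := ran i.+1; rewrite !mem_iota; case: (odd i) => /=; lia.
Qed.

Lemma good_shift_up n a : good n a ->
  (forall p, 0 < p <= n -> odd p -> ith a p <= floor_half1 n) -> good n (shift_up n a).
Proof.
move=> ga low; have [sa ran _ _ _] := (goodP n a).1 ga.
have ca : good n [seq n.+1 - x | x <- a] := good_complement ga.
have hc : cond_i n [seq n.+1 - x | x <- a].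
  apply: (cond_i_of_odd_high ca) => p hp op; have := low p hp op.
  by rewrite ith_map ?sa //; have := halves_spec n; lia.
by rewrite (shift_up_complement sa ran hc); apply/good_complement/good_shift_down.
Qed.

Theorem lemma1 (n : nat) (a : seq nat) :
  1 <= n -> good n a ->
  good n [seq n.+1 - x | x <- a]
  /\ ((forall p, 1 <= p <= n -> odd p -> ceil_half1 n <= ith a p) ->
      good n [seq (if odd i.+1 then ith a i.+1 - floor_half n
                   else ith a i.+1 + floor_half1 n) | i <- iota 0 n])
  /\ ((forall p, 1 <= p <= n -> odd p -> ith a p <= floor_half1 n) ->
      good n [seq (if odd i.+1 then ith a i.+1 + floor_half n
                   else ith a i.+1 - floor_half1 n) | i <- iota 0 n]).
Proof.
move=> _ ga; split; first exact: good_complement.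
split=> [high | low]; last exact: good_shift_up.
exact/(good_shift_down ga)/cond_i_of_odd_high.
Qed.
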